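(* Fix $m\ge1$ and let $\tilde F(u_1,\dots,u_m;t)=\sum_{n\ge0}\sum_{\pi\in\Pi^{(m)}_n}u_1^{a_1(\pi)}\cdots u_m^{a_m(\pi)}t^{n}$. Then, writing $\tilde F(\mathbf u;t)=\tilde F(u_1,\dots,u_m;t)$, \[ \tilde F(\mathbf u;t)=u_1\cdots u_m+t\,u_1\cdots u_m\,\tilde F(\mathbf u;t)+t\,u_1\,\frac{\tilde F(\mathbf u;t)-u_1\tilde F(1,u_2,\dots,u_m;t)}{u_1-1} +t\sum_{j=2}^m u_1u_2\cdots u_j\,\frac{\tilde F(\mathbf u;t)-\tilde F(u_1,\dots,u_{j-2},u_{j-1}u_j,1,u_{j+1},\dots,u_m;t)}{u_j-1}. \]
   Context: A set partition of $[n]$ is a collection of nonempty pairwise disjoint blocks with union $[n]$ ($n=0$: empty partition). Arcs are pairs $(i,j)$, $i<j$, of consecutive elements (in numerical order) of a block. An $m$-nesting is a set of $m$ arcs $(i_1,j_1),\dots,(i_m,j_m)$ with $i_1<\dots<i_m<j_m<\dots<j_1$. $\Pi^{(m)}_n$ is the set of partitions of $[n]$ with no $(m+1)$-nesting. The label $(a_1(\pi),\dots,a_m(\pi))$ of $\pi\in\Pi^{(m)}_n$ is defined by: $a_j(\pi)=1+$(number of blocks) if $\pi$ has no $j$-nesting; otherwise $a_j(\pi)=1+$(number of blocks whose maximal element exceeds the smallest vertex of the rightmost $j$-nesting), the rightmost $j$-nesting being one whose smallest vertex is maximal among all $j$-nestings. The empty partition has label $(1,\dots,1)$. The identity is one of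 formal power series in $t$ with polynomial coefficients in the $u_i$ (the quotients are polynomial). *)

From HB Require Import structures.
From mathcomp Require Import all_boot all_order all_algebra.
From mathcomp Require Export mpoly.
Set Implicit Arguments. Unset Strict Implicit. Unset Printing Implicit Defensive.
Import Order.TTheory GRing.Theory Num.Theory.
Local Open Scope ring_scope.

(* Ground set [n] is represented by 'I_n = {0,...,n-1} (order-preserving shift). *)
Definition set_partition (n : nat) (P : {set {set 'I_n}}) : bool :=
  partition P [set: 'I_n].

Definition arc (n : nat) (P : {set {set 'I_n}}) (i j : 'I_n) : bool :=
  [exists B in P, [&& i \in B, j \in B, (i < j)%N &
                     [forall k in B, ~~ ((i < k)%N && (k < j)%N)]]].

Definition is_nesting (n k : nat) (P : {set {set 'I_n}})
    (f : {ffun 'I_k -> 'I_n * 'I_n}) : bool :=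
  [forall a : 'I_k, arc P (f a).1 (f a).2] &&
  [forall a : 'I_k, forall b : 'I_k, (a < b)%N ==>
     (((f a).1 < (f b).1)%N && ((f b).2 < (f a).2)%N)].

Definition has_nesting (n k : nat) (P : {set {set 'I_n}}) : bool :=
  [exists f : {ffun 'I_k -> 'I_n * 'I_n}, is_nesting P f].

Definition nesting_mins (n k : nat) (P : {set {set 'I_n}}) : {set 'I_n} :=
  [set s | [exists f : {ffun 'I_k -> 'I_n * 'I_n},
     [&& is_nesting P f, [exists a : 'I_k, (f a).1 == s] &
         [forall a : 'I_k, (s <= (f a).1)%N]]]].

Definition bmax (n : nat) (B : {set 'I_n}) : nat := \max_(x in B) (val x).

(* The label a_k(P): 1 + #blocks if no k-nesting; otherwise 1 + number of
   blocks whose maximal element exceeds the smallest vertex of the rightmost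
   k-nesting (the largest smallest-vertex among all k-nestings). *)
Definition label (n k : nat) (P : {set {set 'I_n}}) : nat :=
  if ~~ has_nesting k P then #|P|.+1
  else let s := \max_(x in nesting_mins k P) (val x) in
       #|[set B in P | (s < bmax B)%N]|.+1.

Definition Pim (m n : nat) (P : {set {set 'I_n}}) : bool :=
  set_partition P && ~~ has_nesting m.+1 P.

(* Coefficient of t^n in F~(u_1..u_m;t): variable u_{j+1} is 'X_j, j : 'I_m. *)
Definition Fcoef (m n : nat) : {mpoly int[m]} :=
  \sum_(P : {set {set 'I_n}} | Pim m P)
     \prod_(j < m) 'X_j ^+ label j.+1 P.

(* Formal power series in t with coefficients in a ring: sequences of
   coefficients.  tmul G = t * G. *)
Definition tmul (R : nzRingType) (G : nat -> R) : nat -> R :=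
  fun n => if n is n'.+1 then G n' else 0.
Definition fcst (R : nzRingType) (c : R) : nat -> R :=
  fun n => if n is 0 then c else 0.

Definition subst_vars (m : nat) (f : 'I_m -> {mpoly int[m]})
    (p : {mpoly int[m]}) : {mpoly int[m]} :=
  comp_mpoly [tuple f i | i < m] p.

Definition sub_first (m : nat) : 'I_m -> {mpoly int[m]} :=
  fun i => if val i == 0%N then 1 else 'X_i.

(* for j = j'+1 >= 2 (0-based j' >= 1):
   (u_1,...,u_m) -> (u_1,...,u_{j-2}, u_{j-1} u_j, 1, u_{j+1},...,u_m) *)
Definition sub_merge (m : nat) (j' : 'I_m) : 'I_m -> {mpoly int[m]} :=
  fun i => if val i == j'.-1 then 'X_i * 'X_j'
           else if i == j' then 1 else 'X_i.

(* subtracted term in the numerator of the j-th quotient (0-based j') *)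
Definition numer_sub (m : nat) (j' : 'I_m) (F : nat -> {mpoly int[m]})
    (n : nat) : {mpoly int[m]} :=
  if val j' == 0%N then 'X_j' * subst_vars (@sub_first m) (F n)
  else subst_vars (sub_merge j') (F n).

From Pilot Require Import Defs.
From HB Require Import structures.
From mathcomp Require Import all_boot all_order all_algebra.
From mathcomp Require Import mpoly.
Import GRing.Theory.

Set Implicit Arguments. Unset Strict Implicit. Unset Printing Implicit Defensive.
Local Open Scope nat_scope.

(* Every partition of [n+1] arises uniquely from a partition [P] of [n], either
   by adding [n+1] as a singleton or by appending it to a block [B]; the latter
   creates exactly one new arc, from [max B] to [n+1].  Call the class of [B]
   the least [j] such that every (j+1)-nesting of [P] starts before [max B].
   The singleton raises every label by one.  Appending to a block of class [j]
   raises [a_1, ..., a_j] by one, sets [a_(j+1)] to two plus the number of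
   blocks whose maximum exceeds [max B], keeps the other labels, and avoids
   (m+1)-nestings iff [j < m].  Over the blocks of class [j], listed by
   decreasing maximum, the resulting powers of [u_(j+1)] telescope, which
   produces the (j+1)-st difference quotient of the functional equation. *)

(** * Nestings as chains of nested arcs *)

(* [k+1] nested [a]-arcs with outermost arc [(x, y)]; the inner arcs have
   endpoints in ['I_N]. *)
Fixpoint nest_chain (a : rel nat) (N k x y : nat) : bool :=
  if k is k'.+1 then a x y && [exists x' : 'I_N, exists y' : 'I_N,
       [&& x < x', y' < y & nest_chain a N k' x' y']]
  else a x y.

Definition starts_before (a : rel nat) (N k z : nat) : bool :=
  [forall x : 'I_N, forall y : 'I_N, nest_chain a N k x y ==> (x < z)].

Lemma nest_chain_arc a N k x y : nest_chain a N k x y -> a x y.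
Proof. by case: k => [|k] //= /andP[]. Qed.

Lemma starts_before_mono a N k z z' :
  z <= z' -> starts_before a N k z -> starts_before a N k z'.
Proof.
move=> le_zz' /forallP H; apply/forallP => x; apply/forallP => y; apply/implyP => Hxy.
by move/forallP: (H x) => /(_ y) /implyP /(_ Hxy) /leq_trans; apply.
Qed.

Lemma starts_before_depthS a N k z :
  starts_before a N k z -> starts_before a N k.+1 z.
Proof.
move=> /forallP H; apply/forallP => x; apply/forallP => y; apply/implyP => /= /andP[_].
case/existsP => x' /existsP[y' /and3P[lt_xx' _ Hx'y']].
by move/forallP: (H x') => /(_ y') /implyP /(_ Hx'y'); apply: ltn_trans.
Qed.

Lemma starts_before_depth_mono a N k k' z :
  k <= k' -> starts_before a N k z -> starts_before a N k' z.
Proof.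
move=> /subnKC <-; elim: (k' - k) => [|d IH]; first by rewrite addn0.
by move=> H; rewrite addnS; apply/starts_before_depthS/IH.
Qed.

Lemma starts_before_top a N k : starts_before a N k N.
Proof. by apply/forallP => x; apply/forallP => y; rewrite ltn_ord implybT. Qed.

Section ChainExtension.

Variables (a a' : rel nat) (N b : nat) (c : bool).
Hypothesis a_lt : forall x y, a x y -> x < y < N.
Hypothesis a'E : forall x y, a' x y = a x y || [&& c, x == b & y == N].

Let a'_old x y : y < N -> a' x y = a x y.
Proof. by move=> lt_yN; rewrite a'E (ltn_eqF lt_yN) !andbF orbF. Qed.

Lemma nest_chain_old k x y : y < N -> nest_chain a' N.+1 k x y = nest_chain a N k x y.
Proof.
elim: k x y => [|k IH] x y lt_yN /=; rewrite a'_old //; congr (_ && _).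
apply/existsP/existsP => -[x' /existsP[y' /and3P[lt_xx' lt_y'y Hx'y']]].
  have lt_y'N : y' < N by apply: ltn_trans lt_y'y lt_yN.
  rewrite IH // in Hx'y'; have /andP[lt_x'y' _] := a_lt (nest_chain_arc Hx'y').
  exists (Ordinal (ltn_trans lt_x'y' lt_y'N)); apply/existsP; exists (Ordinal lt_y'N).
  by rewrite /= lt_xx' lt_y'y.
exists (widen_ord (leqnSn N) x'); apply/existsP; exists (widen_ord (leqnSn N) y').
by rewrite /= lt_xx' lt_y'y IH // (ltn_trans lt_y'y lt_yN).
Qed.

(* A chain ending at [N] uses the new arc [(b, N)] as its outermost arc. *)
Lemma nest_chain_new k x :
  nest_chain a' N.+1 k x N =
  [&& c, x == b & (k == 0) || ~~ starts_before a N k.-1 b.+1].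
Proof.
have aN x' : a x' N = false by apply/negP => /a_lt; rewrite ltnn andbF.
case: k => [|k] /=; first by rewrite a'E aN eqxx /= andbT.
rewrite a'E aN eqxx /= andbT -andbA; case: c => //=; case: eqP => //= ->.
apply/existsP/negP => [[x' /existsP[y' /and3P[lt_bx' lt_y'N Hx'y']]]|H].
  rewrite nest_chain_old // in Hx'y'.
  have /andP[lt_x'y' _] := a_lt (nest_chain_arc Hx'y').
  move/forallP/(_ (Ordinal (ltn_trans lt_x'y' lt_y'N)))/forallP/(_ (Ordinal lt_y'N)).
  by move/implyP/(_ Hx'y'); rewrite /= ltnS leqNgt lt_bx'.
move/negP: H; rewrite negb_forall => /existsP[x']; rewrite negb_forall => /existsP[y'].
rewrite negb_imply ltnS -ltnNge => /andP[Hx'y' lt_bx'].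
exists (widen_ord (leqnSn N) x'); apply/existsP; exists (widen_ord (leqnSn N) y').
by rewrite /= lt_bx' ltn_ord nest_chain_old.
Qed.

Hypothesis lt_bN : c -> b < N.

Lemma starts_before_ext k z :
  starts_before a' N.+1 k z =
  starts_before a N k z &&
  ([&& c & (k == 0) || ~~ starts_before a N k.-1 b.+1] ==> (b < z)).
Proof.
apply/forallP/andP => [H|[H1 H2] x].
  split.
    apply/forallP => x; apply/forallP => y; apply/implyP => Hxy.
    have /andP[_ lt_yN] := a_lt (nest_chain_arc Hxy).
    move/forallP: (H (widen_ord (leqnSn N) x)) => /(_ (widen_ord (leqnSn N) y)) /implyP.
    by apply; rewrite /= nest_chain_old.
  apply/implyP => Hc.
  have lt_bN1 : b < N.+1 by apply/ltnW/lt_bN; case/andP: Hc.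
  move/forallP: (H (Ordinal lt_bN1)) => /(_ ord_max) /implyP; apply.
  by rewrite /= nest_chain_new eqxx.
apply/forallP => y; apply/implyP => Hxy.
have := ltn_ord y; rewrite ltnS leq_eqVlt => /orP[/eqP yN|lt_yN].
  rewrite yN nest_chain_new in Hxy.
  by case/and3P: Hxy => Hc /eqP -> Hk; move/implyP: H2; apply; rewrite Hc.
rewrite nest_chain_old // in Hxy.
have /andP[lt_xy _] := a_lt (nest_chain_arc Hxy).
move/forallP: H1 => /(_ (Ordinal (ltn_trans lt_xy lt_yN))) /forallP /(_ (Ordinal lt_yN)).
by move/implyP; apply.
Qed.

End ChainExtension.

(** * Arcs, nestings and labels of a partition *)

Section PartitionNestings.
Variable N : nat.
Implicit Types (B : {set 'I_N}) (P : {set {set 'I_N}}).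

Definition block_arc B (i j : nat) : bool :=
  [exists i' in B, exists j' in B, [&& val i' == i, val j' == j, i < j &
     [forall k in B, ~~ ((i < val k) && (val k < j))]]].

Definition part_arc P (i j : nat) : bool := [exists B in P, block_arc B i j].

Lemma block_arcP B i j :
  reflect (exists i' j', [/\ i' \in B, j' \in B, val i' = i, val j' = j &
             i < j /\ forall k, k \in B -> ~~ ((i < val k) && (val k < j))])
          (block_arc B i j).
Proof.
apply: (iffP existsP) => [[i' /andP[i'B /existsP[j' /andP[j'B]]]]|].
  case/and4P=> /eqP ei /eqP ej lt_ij /forallP H.
  by exists i', j'; split => //; split => // k kB; move/implyP: (H k); apply.
move=> [i' [j' [i'B j'B ei ej [lt_ij H]]]]; exists i'; rewrite i'B /=.
apply/existsP; exists j'; rewrite j'B ei ej !eqxx lt_ij /=.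
by apply/forallP => k; apply/implyP; apply: H.
Qed.

Lemma arc_partE P (i j : 'I_N) : Defs.arc P i j = part_arc P i j.
Proof.
apply/existsP/existsP => -[B /andP[BP H]]; exists B; rewrite BP /=.
  case/and4P: H => iB jB lt_ij H; apply/block_arcP; exists i, j; split => //.
  by split => // k kB; move/forallP/(_ k)/implyP: H; apply.
case/block_arcP: H => i' [j' [i'B j'B ei ej [lt_ij H]]].
have -> : i = i' by apply/val_inj.
have -> : j = j' by apply/val_inj.
by rewrite i'B j'B ei ej lt_ij; apply/forallP => k; apply/implyP/H.
Qed.

Lemma part_arc_lt P i j : part_arc P i j -> i < j < N.
Proof.
case/existsP => B /andP[_ /block_arcP[i' [j' [_ _ <- <- [lt_ij _]]]]].
by rewrite lt_ij ltn_ord.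
Qed.

Lemma nesting_chain k P (f : {ffun 'I_k.+1 -> 'I_N * 'I_N}) :
  is_nesting P f -> nest_chain (part_arc P) N k (f ord0).1 (f ord0).2.
Proof.
elim: k f => [|k IH] f /andP[/forallP Harc /forallP Hnest]; first by rewrite /= -arc_partE.
rewrite /= -arc_partE Harc /=.
pose g := [ffun a : 'I_k.+1 => f (lift ord0 a)].
have Hg : is_nesting P g.
  apply/andP; split; apply/forallP => a; rewrite ?ffunE //.
  apply/forallP => b; rewrite !ffunE; apply/implyP => lt_ab.
  by move/forallP: (Hnest (lift ord0 a)) => /(_ (lift ord0 b)) /implyP; apply.
have := IH g Hg; rewrite ffunE => Hchain.
have /forallP/(_ (lift ord0 ord0))/implyP/(_ isT)/andP[lt1 lt2] := Hnest ord0.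
apply/existsP; exists (f (lift ord0 ord0)).1; apply/existsP; exists (f (lift ord0 ord0)).2.
by rewrite lt1 lt2.
Qed.

Lemma chain_nesting k P x y : nest_chain (part_arc P) N k x y ->
  exists f : {ffun 'I_k.+1 -> 'I_N * 'I_N},
    [/\ is_nesting P f, val (f ord0).1 = x & val (f ord0).2 = y].
Proof.
elim: k x y => [|k IH] x y /= => [Hxy|/andP[Hxy]].
  have /andP[lt_xy lt_yN] := part_arc_lt Hxy.
  exists [ffun _ => (Ordinal (ltn_trans lt_xy lt_yN), Ordinal lt_yN)].
  split; rewrite ?ffunE //; apply/andP; split; apply/forallP => a; rewrite ?ffunE /= ?arc_partE //.
  by apply/forallP => b; case: a b => [[]] // ? [[]].
case/existsP => x' /existsP[y' /and3P[lt_xx' lt_y'y Hx'y']].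
have [g [Hg gx gy]] := IH _ _ Hx'y'.
have /andP[lt_xy lt_yN] := part_arc_lt Hxy.
have g_inside (b : 'I_k.+1) : x < val (g b).1 /\ val (g b).2 < y.
  case: (posnP b) => [b0|b_gt0].
    have -> : b = ord0 by apply/val_inj.
    by rewrite gx gy.
  case/andP: Hg => _ /forallP/(_ ord0)/forallP/(_ b)/implyP/(_ b_gt0)/andP[lt1 lt2].
  by rewrite gx in lt1; rewrite gy in lt2; split; [apply: ltn_trans lt1|apply: ltn_trans lt_y'y].
exists [ffun a => if unlift ord0 a is Some b then g b
                 else (Ordinal (ltn_trans lt_xy lt_yN), Ordinal lt_yN)].
split; rewrite ?ffunE ?unlift_none //.
case/andP: Hg => /forallP Harc /forallP Hnest.
apply/andP; split; apply/forallP => a; rewrite ?ffunE.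
  by case: unliftP => [b _|_] //=; rewrite arc_partE.
apply/forallP => b; rewrite ffunE; apply/implyP.
case: unliftP => [a' ->|->]; case: unliftP => [b' ->|->] //=.
  rewrite /= /bump /= !add1n ltnS => lt_ab.
  by move/forallP: (Hnest a') => /(_ b') /implyP; apply.
by move=> _; have [-> ->] := g_inside b'.
Qed.

Lemma has_nestingE k P :
  has_nesting k.+1 P = [exists x : 'I_N, exists y : 'I_N, nest_chain (part_arc P) N k x y].
Proof.
apply/existsP/existsP => [[f Hf]|[x /existsP[y Hxy]]].
  by exists (f ord0).1; apply/existsP; exists (f ord0).2; apply: nesting_chain.
by have [f [Hf _ _]] := chain_nesting Hxy; exists f.
Qed.

Lemma nesting_minsE k P (x : 'I_N) :
  (x \in nesting_mins k.+1 P) = [exists y : 'I_N, nest_chain (part_arc P) N k x y].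
Proof.
have first_min f (a : 'I_k.+1) : is_nesting P f -> (f ord0).1 <= (f a).1.
  case: (posnP a) => [a0|a_gt0] Hf; first by have -> : a = ord0 by apply/val_inj.
  case/andP: Hf => _ /forallP/(_ ord0)/forallP/(_ a)/implyP/(_ a_gt0)/andP[lt _].
  exact: ltnW.
rewrite inE; apply/existsP/existsP => [[f /and3P[Hf /existsP[a /eqP fa] /forallP Hmin]]|[y Hxy]].
  have fx : (f ord0).1 = x.
    by apply/val_inj/eqP; rewrite eqn_leq Hmin andbT -fa first_min.
  by exists (f ord0).2; rewrite -fx; apply: nesting_chain.
have [f [Hf fx _]] := chain_nesting Hxy.
exists f; rewrite Hf /=; apply/andP; split.
  by apply/existsP; exists ord0; apply/eqP/val_inj.
by apply/forallP => a; rewrite -fx first_min.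
Qed.

Definition before P (k z : nat) : bool := starts_before (part_arc P) N k z.

(* The rightmost nesting starts before [max B] iff every nesting does, so
   [label] counts the blocks whose maximum lies right of all (k+1)-nestings. *)
Lemma labelE k P : label k.+1 P = #|[set B in P | before P k (bmax B)]|.+1.
Proof.
rewrite /label has_nestingE.
case: existsP => [[x0 /existsP[y0 H0]]|Hnone] /=; congr _.+1; apply: eq_card => B; rewrite !inE;
  case: (B \in P) => //=; last first.
  symmetry; apply/forallP => x; apply/forallP => y; apply/implyP => Hxy.
  by case: Hnone; exists x; apply/existsP; exists y.
have x0_min : x0 \in nesting_mins k.+1 P by rewrite nesting_minsE; apply/existsP; exists y0.
apply/idP/forallP => [lt x|H].
  apply/forallP => y; apply/implyP => Hxy; apply: leq_ltn_trans lt.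
  by apply: (@leq_bigmax_cond _ _ _ x); rewrite nesting_minsE; apply/existsP; exists y.
have [i0 + ->] := eq_bigmax_cond (fun x : 'I_N => val x) (introT card_gt0P (ex_intro _ x0 x0_min)).
rewrite nesting_minsE => /existsP[y Hxy].
by move/forallP: (H i0) => /(_ y) /implyP; apply.
Qed.

Lemma before0 k P : before P k 0 = ~~ has_nesting k.+1 P.
Proof.
rewrite has_nestingE; apply/forallP/negP => [H /existsP[x /existsP[y Hxy]]|H x].
  by move/forallP: (H x) => /(_ y) /implyP /(_ Hxy).
apply/forallP => y; apply/implyP => Hxy; case: H.
by apply/existsP; exists x; apply/existsP; exists y.
Qed.

End PartitionNestings.

(** * Partitions of [n+1] as extended partitions of [n] *)

Lemma disjoint_intro (T : finType) (A B : {set T}) :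
  (forall x, x \in A -> x \in B -> False) -> [disjoint A & B].
Proof. by move=> H; apply/pred0P => x /=; apply/negP => /andP[]; apply: H. Qed.

Lemma exists_imset (T U : finType) (f : T -> U) (A : {set T}) (q : pred U) :
  [exists y in f @: A, q y] = [exists x in A, q (f x)].
Proof.
apply/existsP/existsP => [[_ /andP[/imsetP[x xA ->] qfx]]|[x /andP[xA qfx]]].
  by exists x; rewrite xA.
by exists (f x); rewrite imset_f.
Qed.

Lemma card_imset_sep (T U : finType) (f : T -> U) (A : {set T}) (q : pred U) :
  injective f -> #|[set y in f @: A | q y]| = #|[set x in A | q (f x)]|.
Proof.
move=> f_inj; rewrite -(card_imset _ f_inj); apply: eq_card => y; rewrite !inE.
apply/andP/imsetP => [[/imsetP[x xA ->] qfx]|[x]]; first by exists x; rewrite // inE xA.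
by rewrite inE => /andP[xA qfx] ->; rewrite imset_f.
Qed.

Lemma card_sep_addn (T : finType) (A : {set T}) (a : T) (q : pred T) : a \in A ->
  #|[set x in A | (x == a) || q x]| = #|[set x in A | q x]| + ~~ q a.
Proof.
move=> aA; case qa: (q a) => /=.
  by rewrite addn0; apply: eq_card => x; rewrite !inE; case: eqP => // ->; rewrite qa.
rewrite (_ : [set x in A | (x == a) || q x] = a |: [set x in A | q x]).
  by rewrite cardsU1 !inE qa andbF addnC.
by apply/setP => x; rewrite !inE; case: eqP => // ->; rewrite aA.
Qed.

Section BlockMax.
Variable n : nat.
Implicit Types (B : {set 'I_n}) (P : {set {set 'I_n}}).

Lemma bmax_ub B x : x \in B -> val x <= bmax B.
Proof. by move=> xB; apply: (@leq_bigmax_cond _ _ (fun x : 'I_n => val x) x). Qed.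

Lemma bmax_mem B : B != set0 -> exists2 x, x \in B & val x = bmax B.
Proof.
case/set0Pn => x0 x0B.
have [x xB e] := eq_bigmax_cond (fun x : 'I_n => val x) (introT card_gt0P (ex_intro _ x0 x0B)).
by exists x; rewrite // /bmax e.
Qed.

Lemma bmax_lt B : B != set0 -> bmax B < n.
Proof. by case/bmax_mem => x _ <-; apply: ltn_ord. Qed.

Lemma bmax_inj P : partition P [set: 'I_n] -> {in P &, injective (@bmax n)}.
Proof.
case/and3P => _ /trivIsetP trivP P0 B1 B2 B1P B2P eB.
have [x1 x1B e1] : exists2 x, x \in B1 & val x = bmax B1.
  by apply: bmax_mem; apply: contraNneq P0 => <-.
have [x2 x2B e2] : exists2 x, x \in B2 & val x = bmax B2.
  by apply: bmax_mem; apply: contraNneq P0 => <-.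
have ex : x2 = x1 by apply/val_inj; rewrite e1 e2 eB.
rewrite {}ex in x2B.
apply/eqP; apply: contraTT isT => neB.
by move/disjointFr: (trivP _ _ B1P B2P neB) => /(_ _ x1B); rewrite x2B.
Qed.

End BlockMax.

Section BlockClass.
Variables (n : nat) (P : {set {set 'I_n}}).
Hypothesis partP : partition P [set: 'I_n].
Implicit Types (B : {set 'I_n}).

Lemma part_arc_bmaxF B y : B \in P -> part_arc P (bmax B) y = false.
Proof.
case/and3P: partP => _ /trivIsetP trivP P0 BP.
apply/negbTE/negP => /existsP[C /andP[CP /block_arcP[i [j [iC jC ei ej [lt_ij _]]]]]].
have [x xB ex] : exists2 x, x \in B & val x = bmax B by apply: bmax_mem; apply: contraNneq P0 => <-.
have exi : x = i by apply/val_inj; rewrite ex ei.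
rewrite -{}exi in iC ei.
case: (eqVneq C B) => [eC|neC]; last by move/disjointFr: (trivP _ _ CP BP neC) => /(_ _ iC); rewrite xB.
by rewrite eC in jC; move: (bmax_ub jC); rewrite ej leqNgt lt_ij.
Qed.

(* No nesting starts at a block maximum, since no arc does. *)
Lemma before_bmaxS B k : B \in P -> before P k (bmax B).+1 = before P k (bmax B).
Proof.
move=> BP; apply/idP/idP; last exact: starts_before_mono.
move/forallP => H; apply/forallP => x; apply/forallP => y; apply/implyP => Hxy.
move/forallP: (H x) => /(_ y) /implyP /(_ Hxy); rewrite ltnS leq_eqVlt => /orP[/eqP ex|//].
by move: (nest_chain_arc Hxy); rewrite ex part_arc_bmaxF.
Qed.

Definition block_class (j : nat) B : bool :=
  before P j (bmax B) && ((j == 0) || ~~ before P j.-1 (bmax B)).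

Definition rank B : nat := #|[set C in P | bmax B < bmax C]|.

Lemma block_classE j B : block_class j B -> forall k, before P k (bmax B) = (j <= k).
Proof.
case/andP => before_j min_j k; case: leqP => [le_jk|lt_kj].
  exact: starts_before_depth_mono before_j.
apply: contraTF min_j => before_k; rewrite negb_or negbK -lt0n (leq_ltn_trans _ lt_kj) //=.
by apply: starts_before_depth_mono before_k; rewrite -ltnS prednK // (leq_ltn_trans _ lt_kj).
Qed.

Lemma block_class_unique j1 j2 B : block_class j1 B -> block_class j2 B -> j1 = j2.
Proof.
move=> c1 c2; apply/eqP; rewrite eqn_leq -(block_classE c1) -(block_classE c2).
by case/andP: c1 => -> _; case/andP: c2 => -> _.
Qed.

Lemma block_class_exists B k : before P k (bmax B) -> exists2 j, j <= k & block_class j B.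
Proof.
move=> before_k; have ex_before : exists j, before P j (bmax B) by exists k.
case: (ex_minnP ex_before) => j before_j min_j; exists j; first exact: min_j.
rewrite /block_class before_j; case: j before_j min_j => [//|j] _ min_j /=.
by apply/negP => /min_j; rewrite ltnn.
Qed.

End BlockClass.

Section Extension.
Variable n : nat.
Implicit Types (B : {set 'I_n}) (P : {set {set 'I_n}}) (o : option {set 'I_n}).

Definition emb (x : 'I_n) : 'I_n.+1 := lift ord_max x.
Definition emb_set B : {set 'I_n.+1} := emb @: B.
Definition attach B0 B : {set 'I_n.+1} :=
  emb_set B :|: (if B == B0 then [set ord_max] else set0).

(* [extend P None] adds the new point [n] as a singleton block,
   [extend P (Some B0)] adds it to the block [B0]. *)
Definition extend P o : {set {set 'I_n.+1}} :=
  if o is Some B0 then attach B0 @: P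
  else emb_set @: P :|: [set [set ord_max]].

Definition choice_in P o : bool := if o is Some B0 then B0 \in P else true.

Definition trace (B' : {set 'I_n.+1}) : {set 'I_n} := [set x | emb x \in B'].
Definition trace_part (P' : {set {set 'I_n.+1}}) : {set {set 'I_n}} :=
  (trace @: P') :\ set0.
Definition last_choice (P' : {set {set 'I_n.+1}}) : option {set 'I_n} :=
  let B := trace (pblock P' ord_max) in if B == set0 then None else Some B.

Lemma val_emb x : val (emb x) = val x.
Proof. exact: lift_max. Qed.

Lemma emb_inj : injective emb.
Proof. exact: lift_inj. Qed.

Variant emb_spec : 'I_n.+1 -> Type :=
  | EmbMax : emb_spec ord_max
  | EmbEmb x : emb_spec (emb x).

Lemma embP y : emb_spec y.
Proof. by case: (unliftP ord_max y) => [x ->|->]; constructor. Qed.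

Lemma emb_eq_max x : (emb x == ord_max) = false.
Proof. by apply/negbTE; rewrite eq_sym; apply: neq_lift. Qed.

Lemma mem_emb_set B x : (emb x \in emb_set B) = (x \in B).
Proof. exact/mem_imset/emb_inj. Qed.

Lemma max_emb_set B : (ord_max \in emb_set B) = false.
Proof. by apply/negbTE/negP => /imsetP[x _ /eqP]; rewrite eq_sym emb_eq_max. Qed.

Lemma mem_attach B0 B x : (emb x \in attach B0 B) = (x \in B).
Proof. by rewrite inE mem_emb_set; case: (B == B0); rewrite ?inE ?emb_eq_max orbF. Qed.

Lemma max_attach B0 B : (ord_max \in attach B0 B) = (B == B0).
Proof. by rewrite inE max_emb_set; case: (B == B0); rewrite ?inE ?eqxx. Qed.

Lemma trace_emb_set B : trace (emb_set B) = B.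
Proof. by apply/setP => x; rewrite inE mem_emb_set. Qed.

Lemma trace_attach B0 B : trace (attach B0 B) = B.
Proof. by apply/setP => x; rewrite inE mem_attach. Qed.

Lemma trace_max : trace [set ord_max] = set0.
Proof. by apply/setP => x; rewrite !inE emb_eq_max. Qed.

Lemma attach_inj B0 : injective (attach B0).
Proof. by move=> B C eBC; rewrite -(trace_attach B0 B) eBC trace_attach. Qed.

Lemma emb_set_inj : injective emb_set.
Proof. by move=> B C eBC; rewrite -(trace_emb_set B) eBC trace_emb_set. Qed.

Lemma emb_set_trace (B' : {set 'I_n.+1}) :
  B' = emb_set (trace B') :|: (if ord_max \in B' then [set ord_max] else set0).
Proof.
apply/setP => y; rewrite inE; case: (embP y) => [|x].
  by rewrite max_emb_set /=; case: (ord_max \in B'); rewrite !inE ?eqxx.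
by rewrite mem_emb_set inE; case: (ord_max \in B'); rewrite !inE ?emb_eq_max ?orbF.
Qed.

Lemma single_max_notin P : [set ord_max] \notin emb_set @: P.
Proof. by apply/imsetP => -[B _ /setP /(_ ord_max)]; rewrite inE eqxx max_emb_set. Qed.

Lemma partition_extend P o :
  partition P [set: 'I_n] -> choice_in P o -> partition (extend P o) [set: 'I_n.+1].
Proof.
case/and3P => /eqP covP /trivIsetP trivP P0 Po.
have inP x : exists2 B, B \in P & x \in B.
  have /bigcupP[B BP xB] : x \in cover P by rewrite covP inE.
  by exists B.
have nonempty B : B \in P -> exists x, x \in B.
  move=> BP; case: (set_0Vmem B) => [B0|[x xB]]; last by exists x.
  by rewrite -B0 BP in P0.
have disj B1 B2 x : B1 \in P -> B2 \in P -> B1 != B2 -> x \in B1 -> x \in B2 -> False.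
  by move=> B1P B2P neB x1 x2; move/disjointFr: (trivP _ _ B1P B2P neB) => /(_ _ x1); rewrite x2.
case: o Po => [B0|] /= Po; apply/and3P; split.
- apply/eqP/setP => y; rewrite inE; apply/bigcupP; case: (embP y) => [|x].
    by exists (attach B0 B0); [apply: imset_f|rewrite max_attach].
  by have [B BP xB] := inP x; exists (attach B0 B); [apply: imset_f|rewrite mem_attach].
- apply/trivIsetP => A1 A2 /imsetP[B1 B1P ->] /imsetP[B2 B2P ->] neB.
  have neB12 : B1 != B2 by apply: contraNneq neB => ->.
  apply: disjoint_intro => y; case: (embP y) => [|x].
    by rewrite !max_attach => /eqP e1 /eqP e2; rewrite e1 e2 eqxx in neB12.
  by rewrite !mem_attach; apply: disj.
- apply/imsetP => -[B BP eB]; have [x xB] := nonempty B BP.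
  by move: (mem_attach B0 B x); rewrite -eB inE xB.
- apply/eqP/setP => y; rewrite inE; apply/bigcupP; case: (embP y) => [|x].
    by exists [set ord_max]; rewrite !inE ?eqxx ?orbT.
  have [B BP xB] := inP x.
  by exists (emb_set B); [rewrite inE imset_f|rewrite mem_emb_set].
- apply/trivIsetP => A C; rewrite !inE.
  case/orP => [/imsetP[B1 B1P ->]|/eqP ->]; case/orP => [/imsetP[B2 B2P ->]|/eqP ->] neAC.
  + have neB12 : B1 != B2 by apply: contraNneq neAC => ->.
    apply: disjoint_intro => y; case: (embP y) => [|x]; first by rewrite max_emb_set.
    by rewrite !mem_emb_set; apply: disj.
  + by apply: disjoint_intro => y; case: (embP y) => [|x]; rewrite ?max_emb_set // inE emb_eq_max.
  + by apply: disjoint_intro => y; case: (embP y) => [|x]; rewrite ?max_emb_set // inE emb_eq_max.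
  + by rewrite eqxx in neAC.
- rewrite !inE negb_or; apply/andP; split.
    apply/imsetP => -[B BP eB]; have [x xB] := nonempty B BP.
    by move: (mem_emb_set B x); rewrite -eB inE xB.
  by apply/eqP => /setP/(_ ord_max); rewrite !inE eqxx.
Qed.

Lemma trace_part_extend P o : set0 \notin P -> trace_part (extend P o) = P.
Proof.
move=> P0; apply/setP => B; rewrite !inE.
apply/andP/idP => [[B_neq0 /imsetP[B' B'P eB]]|BP].
  subst B; case: o B'P B_neq0 => [B0|] /=; first by case/imsetP => C CP ->; rewrite trace_attach.
  rewrite !inE => /orP[/imsetP[C CP ->]|/eqP ->]; first by rewrite trace_emb_set.
  by rewrite trace_max eqxx.
split; first by apply: contraNneq P0 => <-.
case: o => [B0|] /=.
  by apply/imsetP; exists (attach B0 B); [apply: imset_f|rewrite trace_attach].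
by apply/imsetP; exists (emb_set B); [rewrite inE imset_f|rewrite trace_emb_set].
Qed.

Lemma last_choice_extend P o :
  partition P [set: 'I_n] -> choice_in P o -> last_choice (extend P o) = o.
Proof.
move=> partP Po; have /and3P[_ triv _] := partition_extend partP Po.
case/and3P: partP => _ _ P0; rewrite /last_choice.
case: o Po triv => [B0|] /= B0P triv.
  rewrite (@def_pblock _ _ (attach B0 B0)) ?max_attach ?imset_f // trace_attach.
  by case: eqP => // B0_0; rewrite -B0_0 B0P in P0.
rewrite (@def_pblock _ _ [set ord_max]) ?trace_max ?eqxx //.
  by rewrite !inE eqxx orbT.
by rewrite inE.
Qed.

Section Restriction.
Variable P' : {set {set 'I_n.+1}}.
Hypothesis partP' : partition P' [set: 'I_n.+1].

Let Bmax := pblock P' ord_max.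

Let BmaxP : Bmax \in P'.
Proof. by apply: pblock_mem; case/and3P: partP' => /eqP-> _ _; rewrite inE. Qed.

Let max_Bmax : ord_max \in Bmax.
Proof. by rewrite mem_pblock; case/and3P: partP' => /eqP-> _ _; rewrite inE. Qed.

Let max_other C : C \in P' -> C != Bmax -> ord_max \notin C.
Proof.
move=> CP neC; apply: contra neC => max_C.
by rewrite /Bmax (def_pblock _ CP max_C) //; case/and3P: partP'.
Qed.

Let trace_other C : C \in P' -> ord_max \notin C -> trace C != set0.
Proof.
case/and3P: partP' => _ _ P'0 CP max_C.
case: (set_0Vmem C) => [C0|[y yC]]; first by rewrite -C0 CP in P'0.
case: (embP y) yC max_C => [->//|x xC _]; apply/set0Pn; exists x; by rewrite inE.
Qed.

Lemma partition_trace_part : partition (trace_part P') [set: 'I_n].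
Proof.
case/and3P: partP' => /eqP covP' /trivIsetP trivP' _; apply/and3P; split.
- apply/eqP/setP => x; rewrite inE; apply/bigcupP.
  have /bigcupP[C CP xC] : emb x \in cover P' by rewrite covP' inE.
  exists (trace C); last by rewrite inE.
  by rewrite !inE imset_f // andbT; apply/set0Pn; exists x; rewrite inE.
- apply/trivIsetP => A1 A2; rewrite !inE => /andP[_ /imsetP[C1 C1P ->]] /andP[_ /imsetP[C2 C2P ->]] neC.
  have neC12 : C1 != C2 by apply: contraNneq neC => ->.
  apply: disjoint_intro => x; rewrite !inE => x1 x2.
  by move/disjointFr: (trivP' _ _ C1P C2P neC12) => /(_ _ x1); rewrite x2.
- by rewrite !inE eqxx.
Qed.

Lemma choice_in_last : choice_in (trace_part P') (last_choice P').
Proof. by rewrite /last_choice; case: eqP => //= /eqP ne; rewrite !inE ne imset_f. Qed.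

Lemma extend_trace : extend (trace_part P') (last_choice P') = P'.
Proof.
case/and3P: partP' => _ /trivIsetP trivP' _.
rewrite /last_choice -/Bmax; case: eqP => [Bmax0|/eqP Bmax_neq0] /=.
  have BmaxE : Bmax = [set ord_max] by rewrite [LHS]emb_set_trace Bmax0 max_Bmax /emb_set imset0 set0U.
  have otherE C : C \in P' -> C != Bmax -> emb_set (trace C) = C.
    by move=> CP neC; rewrite [RHS]emb_set_trace (negbTE (max_other CP neC)) setU0.
  apply/setP => A; rewrite !inE; apply/idP/idP.
    case/orP => [/imsetP[R /setD1P[R_neq0 /imsetP[C CP eR]] ->]|/eqP ->]; last by rewrite -BmaxE.
    by rewrite eR in R_neq0 *; rewrite otherE //; apply: contraNneq R_neq0 => ->; rewrite Bmax0.
  move=> AP; case: (eqVneq A Bmax) => [->|neA]; first by rewrite BmaxE eqxx orbT.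
  apply/orP; left; apply/imsetP; exists (trace A); last by rewrite otherE.
  by rewrite !inE trace_other ?max_other // imset_f.
have attachE C : C \in P' -> attach (trace Bmax) (trace C) = C.
  move=> CP; case: (eqVneq C Bmax) => [->|neC]; first by rewrite /attach eqxx [RHS]emb_set_trace max_Bmax.
  rewrite /attach ifF; first by rewrite [RHS]emb_set_trace (negbTE (max_other CP neC)).
  apply/negP => /eqP eB; have /set0Pn[x xB] := Bmax_neq0.
  have xC : emb x \in C by move: xB; rewrite -eB inE.
  have xBmax : emb x \in Bmax by move: xB; rewrite inE.
  by move/disjointFr: (trivP' _ _ CP BmaxP neC) => /(_ _ xC); rewrite xBmax.
apply/setP => A; apply/idP/idP.
  by case/imsetP => R /setD1P[_ /imsetP[C CP ->]] ->; rewrite attachE.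
move=> AP; apply/imsetP; exists (trace A); last by rewrite attachE.
rewrite !inE imset_f // andbT.
by case: (eqVneq A Bmax) => [->//|neA]; apply/trace_other/max_other.
Qed.

End Restriction.

Lemma block_arc_emb_set B i j : block_arc (emb_set B) i j = block_arc B i j.
Proof.
apply/block_arcP/block_arcP => [[_ [_ [/imsetP[x xB ->] /imsetP[y yB ->]]]]|[x [y [xB yB]]]].
  rewrite !val_emb => ei ej [lt_ij H]; exists x, y; split => //; split => // k kB.
  by have := H (emb k); rewrite mem_emb_set val_emb; apply.
move=> ei ej [lt_ij H]; exists (emb x), (emb y); rewrite !mem_emb_set !val_emb.
by split => //; split => // _ /imsetP[k kB ->]; rewrite val_emb; apply: H.
Qed.

Lemma block_arc_add_max B i j : B != set0 ->
  block_arc (emb_set B :|: [set ord_max]) i j = block_arc B i j || (i == bmax B) && (j == n).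
Proof.
move=> B_neq0; have [xm xmB exm] := bmax_mem B_neq0.
apply/block_arcP/orP => [[i' [j' [+ + <- <-]]]|].
  case: (embP i') => [|x]; case: (embP j') => [|y]; rewrite ?val_emb /=.
  - by move=> _ _ []; rewrite ltnn.
  - by move=> _ _ [lt_ij _]; have := ltn_trans lt_ij (ltn_ord y); rewrite ltnn.
  - rewrite !inE mem_emb_set emb_eq_max orbF => xB _ [_ H]; right; rewrite eqxx andbT.
    rewrite eqn_leq bmax_ub //= leqNgt; apply/negP => lt_x.
    have := H (emb xm); rewrite inE mem_emb_set xmB val_emb exm lt_x bmax_lt //.
    by move/(_ isT).
  - rewrite !inE !mem_emb_set !emb_eq_max !orbF => xB yB [lt_ij H]; left; apply/block_arcP.
    exists x, y; split => //; split => // k kB; have := H (emb k).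
    by rewrite inE mem_emb_set kB val_emb => /(_ isT).
case=> [/block_arcP[x [y [xB yB <- <- [lt_ij H]]]]|/andP[/eqP -> /eqP ->]].
  exists (emb x), (emb y); rewrite !inE !mem_emb_set xB yB !val_emb; split => //; split => // k.
  case: (embP k) => [_|k']; last by rewrite !inE mem_emb_set emb_eq_max orbF val_emb; apply: H.
  by apply/negP => /andP[_ lt_ny]; have := ltn_trans lt_ny (ltn_ord y); rewrite ltnn.
exists (emb xm), ord_max; rewrite !inE mem_emb_set xmB eqxx orbT val_emb exm.
split => //; split => [|k]; first by rewrite bmax_lt.
case: (embP k) => [_|k']; first by rewrite ltnn andbF.
by rewrite !inE mem_emb_set emb_eq_max orbF val_emb => k'B; rewrite ltnNge bmax_ub.
Qed.

Lemma block_arc_single_max i j : block_arc [set @ord_max n] i j = false.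
Proof.
apply/block_arcP => -[i' [j' [+ + <- <- [lt_ij _]]]].
by rewrite !inE => /eqP ei /eqP ej; rewrite ei ej ltnn in lt_ij.
Qed.

Definition choice_max o : nat := oapp (@bmax n) 0 o.

Lemma block_arc_attach B0 B i j : B != set0 ->
  block_arc (attach B0 B) i j = block_arc B i j || [&& B == B0, i == bmax B & j == n].
Proof.
move=> B_neq0; rewrite /attach; case: eqP => _ /=; first exact: block_arc_add_max.
by rewrite setU0 block_arc_emb_set orbF.
Qed.

Lemma part_arc_extend P o i j :
  set0 \notin P -> choice_in P o ->
  part_arc (extend P o) i j = part_arc P i j || [&& isSome o, i == choice_max o & j == n].
Proof.
move=> P0; have nonempty B : B \in P -> B != set0 by move=> BP; apply: contraNneq P0 => <-.
case: o => [B0|] /= Po.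
  rewrite /part_arc exists_imset.
  apply/existsP/orP => [[B /andP[BP]]|[/existsP[B /andP[BP arcB]]|/andP[ei ej]]].
  - rewrite block_arc_attach ?nonempty // => /orP[arcB|/and3P[/eqP eB ei ej]].
      by left; apply/existsP; exists B; rewrite BP.
    by right; rewrite -eB ei.
  - by exists B; rewrite BP block_arc_attach ?nonempty ?arcB.
  - by exists B0; rewrite Po block_arc_attach ?nonempty // eqxx ei ej orbT.
rewrite orbF /part_arc; apply/existsP/existsP => [[C /andP[]]|[B /andP[BP arcB]]].
  rewrite !inE => /orP[/imsetP[B BP ->]|/eqP ->]; last by rewrite block_arc_single_max.
  by rewrite block_arc_emb_set => arcB; exists B; rewrite BP.
by exists (emb_set B); rewrite !inE imset_f //= block_arc_emb_set.
Qed.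

Lemma before_extend P o k z :
  partition P [set: 'I_n] -> choice_in P o ->
  before (extend P o) k z =
  before P k z &&
  ([&& isSome o & (k == 0) || ~~ before P k.-1 (choice_max o)] ==> (choice_max o < z)).
Proof.
move=> partP Po; have P0 : set0 \notin P by case/and3P: partP.
rewrite /before (@starts_before_ext (part_arc P) (part_arc (extend P o)) n (choice_max o) (isSome o)).
- case: o Po => [B0|] //= B0P.
  by have := before_bmaxS partP k.-1 B0P; rewrite /before => ->.
- exact: part_arc_lt.
- by move=> x y; apply: part_arc_extend.
- by case: o Po => [B0|] //= B0P _; apply: bmax_lt; apply: contraNneq P0 => <-.
Qed.

Lemma bmax_emb_set B : bmax (emb_set B) = bmax B.
Proof. by rewrite /bmax big_imset; [apply: eq_bigr => x _; apply: val_emb|move=> x y _ _ /emb_inj]. Qed.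

Lemma bmax_ord_max (B : {set 'I_n.+1}) : ord_max \in B -> bmax B = n.
Proof.
move=> maxB; apply/eqP; rewrite eqn_leq (bmax_ub maxB) andbT.
by apply/bigmax_leqP => x _; rewrite -ltnS ltn_ord.
Qed.

Lemma bmax_attach B0 B : bmax (attach B0 B) = if B == B0 then n else bmax B.
Proof.
case: eqP => [->|neB]; first by apply: bmax_ord_max; rewrite max_attach.
by rewrite /attach (introF eqP neB) setU0 bmax_emb_set.
Qed.

Lemma label_extend_None P k :
  partition P [set: 'I_n] -> label k.+1 (extend P None) = (label k.+1 P).+1.
Proof.
move=> partP; rewrite !labelE; congr _.+1.
have beforeE z : before (extend P None) k z = before P k z by rewrite before_extend // andbT.
rewrite (_ : [set B in extend P None | _] =
             [set ord_max] |: [set B in emb_set @: P | before P k (bmax B)]).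
  rewrite cardsU1 inE (negbTE (single_max_notin P)) add1n (card_imset_sep _ _ emb_set_inj).
  by congr _.+1; apply: eq_card => B; rewrite !inE bmax_emb_set.
apply/setP => B; rewrite !inE beforeE; case: (eqVneq B [set ord_max]) => [->|_]; last by rewrite orbF.
by rewrite orbT (bmax_ord_max (set11 _)) /before starts_before_top.
Qed.

Lemma label_extend_Some P B0 j k :
  partition P [set: 'I_n] -> B0 \in P -> block_class P j B0 ->
  label k.+1 (extend P (Some B0)) =
  if k < j then (label k.+1 P).+1 else if k == j then (rank P B0).+2 else label k.+1 P.
Proof.
move=> partP B0P cB0; set b := bmax B0.
have lt_bn : b < n by apply: bmax_lt; case/and3P: partP => _ _ P0; apply: contraNneq P0 => <-.
have condE : (k == 0) || ~~ before P k.-1 b = (k <= j).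
  by case: k => [|k] //=; rewrite (block_classE cB0) -ltnNge.
pose q B := before P k (bmax B) && ((k <= j) ==> (b < bmax B)).
have qB0 : q B0 = (j < k) by rewrite /q (block_classE cB0) -/b ltnn implybF; case: (ltngtP k j).
have qE B : q B = if k == j then b < bmax B else before P k (bmax B).
  rewrite /q; case: (ltngtP k j) => [lt_kj|lt_jk|eq_kj] /=; rewrite ?andbT //.
    apply: andb_idr => before_B; rewrite ltnNge; apply/negP => le_Bb.
    have : before P k b := starts_before_mono le_Bb before_B.
    by rewrite (block_classE cB0) leqNgt lt_kj.
  apply: andb_idl => lt_bB; apply: (starts_before_mono (ltnW lt_bB)).
  by rewrite -[starts_before _ _ _ _]/(before P k b) (block_classE cB0) eq_kj.
have setE : [set B in P | before (extend P (Some B0)) k (bmax (attach B0 B))] =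
            [set B in P | (B == B0) || q B].
  apply/setP => B; rewrite !inE; congr (_ && _).
  rewrite before_extend //= -/b condE bmax_attach; case: eqP => //= _.
  by rewrite /before starts_before_top lt_bn implybT.
rewrite !labelE (card_imset_sep _ _ (@attach_inj B0)) setE.
rewrite card_sep_addn // qB0.
have -> : [set B in P | q B] = [set B in P | if k == j then b < bmax B else before P k (bmax B)].
  by apply/setP => B; rewrite !inE qE.
by case: (ltngtP k j); rewrite ?addn0 ?addn1.
Qed.

Lemma Pim_extend m P o : 0 < m -> partition P [set: 'I_n] -> choice_in P o ->
  Pim m (extend P o) = Pim m P && ~~ (isSome o && ~~ before P m.-1 (choice_max o)).
Proof.
move=> m_gt0 partP Po; rewrite /Pim /set_partition (partition_extend partP Po) partP /=.
rewrite -!before0 before_extend // ltn0 implybF (negbTE (lt0n_neq0 m_gt0)).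
by rewrite andbC.
Qed.

End Extension.

(** * The functional equation *)

Local Open Scope ring_scope.

Definition upward_closed (A : pred nat) := forall x y, (x <= y)%N -> A x -> A y.

Section Telescope.
Variables (R : comNzRingType) (X : R) (A1 A2 : pred nat).
Hypotheses (A1_up : upward_closed A1) (A2_up : upward_closed A2).
Hypothesis A1_A2 : forall x, A1 x -> A2 x.

(* Listing the values in decreasing order, [X ^+ (number of larger values)]
   runs through consecutive powers, so the sum over [A2 \ A1] telescopes. *)
Lemma telescope_rank_seq (t : seq nat) : uniq t -> sorted geq t ->
  (X - 1) * \sum_(x <- t | A2 x && ~~ A1 x) X ^+ count (fun y => x < y)%N t =
  X ^+ count A2 t - X ^+ count A1 t.
Proof.
elim: t => [|M t IH]; first by rewrite big_nil mulr0 subrr.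
rewrite cons_uniq => /andP[Mt ut] st; have {}IH := IH ut (path_sorted st).
have lt_M y : y \in t -> (y < M)%N.
  move=> yt; have /allP/(_ y yt) := order_path_min (rev_trans leq_trans) st.
  by rewrite leq_eqVlt => /orP[/eqP eyM|//]; move: yt; rewrite eyM (negbTE Mt).
have countM : count (fun y => M < y)%N (M :: t) = 0%N.
  rewrite /= ltnn /=; apply/eqP; rewrite -leqn0 leqNgt -has_count; apply/hasP => -[y yt].
  by rewrite ltnNge (ltnW (lt_M y yt)).
have count0 (A : pred nat) : upward_closed A -> ~~ A M -> count A t = 0%N.
  move=> A_up AM; apply/eqP; rewrite -leqn0 leqNgt -has_count; apply/hasP => -[y yt Ay].
  by move: AM; rewrite (A_up _ _ (ltnW (lt_M y yt)) Ay).
rewrite big_cons countM expr0.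
have -> : \sum_(x <- t | A2 x && ~~ A1 x) X ^+ count (fun y => x < y)%N (M :: t) =
          X * \sum_(x <- t | A2 x && ~~ A1 x) X ^+ count (fun y => x < y)%N t.
  rewrite big_distrr big_seq_cond [RHS]big_seq_cond.
  by apply: eq_bigr => x /andP[xt _] /=; rewrite lt_M // exprS.
case A1M: (A1 M).
  by rewrite /= A1M A1_A2 //= !add1n !exprS mulrCA IH mulrBr.
case A2M: (A2 M) => /=.
  rewrite A1M A2M (count0 A1 A1_up (negbT A1M)) /= add0n add1n exprS expr0 in IH *.
  by rewrite mulrDr mulr1 mulrCA IH mulrBr mulr1 addrC addrA subrK.
rewrite A1M A2M (count0 A1 A1_up (negbT A1M)) (count0 A2 A2_up (negbT A2M)) /= in IH *.
by rewrite mulrCA IH subrr mulr0.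
Qed.

Lemma telescope_rank (T : finType) (P : {set T}) (f : T -> nat) : {in P &, injective f} ->
  (X - 1) * \sum_(B in P | A2 (f B) && ~~ A1 (f B)) X ^+ #|[set C in P | f B < f C]%N| =
  X ^+ #|[set B in P | A2 (f B)]| - X ^+ #|[set B in P | A1 (f B)]|.
Proof.
move=> f_inj; set s := map f (enum P).
have cardE (q : pred nat) : #|[set C in P | q (f C)]| = count q s.
  rewrite count_map -sum1_count big_enum_cond -sum1_card.
  by apply: eq_bigl => C; rewrite inE.
have us : uniq s by rewrite map_inj_in_uniq ?enum_uniq // => x y; rewrite !mem_enum; apply: f_inj.
have -> : \sum_(B in P | A2 (f B) && ~~ A1 (f B)) X ^+ #|[set C in P | f B < f C]%N| =
          \sum_(x <- s | A2 x && ~~ A1 x) X ^+ count (fun y => x < y)%N s.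
  by rewrite big_map -big_enum_cond; apply: eq_bigr => B _; rewrite (cardE (fun y => f B < y)%N).
have perm_s : perm_eq (sort geq s) s by rewrite perm_sort.
rewrite !cardE -(perm_big _ perm_s) -!(permP perm_s).
under eq_bigr => x _ do rewrite -(permP perm_s).
by apply: telescope_rank_seq; [rewrite sort_uniq|apply: sort_sorted => x y; apply: leq_total].
Qed.

End Telescope.

Lemma big_option (R : nmodType) (T : finType) (p : pred (option T)) (G : option T -> R) :
  \sum_(o | p o) G o = (if p None then G None else 0) + \sum_(x | p (Some x)) G (Some x).
Proof.
rewrite big_mkcond [X in _ + X]big_mkcond.
have enumE : perm_eq (index_enum (option T)) (None :: map Some (index_enum T)).
  apply: uniq_perm; first exact: index_enum_uniq.
    rewrite /= map_inj_uniq ?index_enum_uniq //; last exact: Some_inj.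
    by rewrite andbT; apply/mapP => -[].
  by case => [x|]; rewrite !mem_index_enum /= ?in_cons //= mem_map ?mem_index_enum //; apply: Some_inj.
by rewrite [LHS](perm_big _ enumE) big_cons big_map.
Qed.

Section Weights.
Variable m : nat.
Implicit Types (j : 'I_m).

Definition weight n (P : {set {set 'I_n}}) : {mpoly int[m]} :=
  \prod_(j < m) 'X_j ^+ label j.+1 P.

Definition weight_but n (P : {set {set 'I_n}}) j : {mpoly int[m]} :=
  \prod_(i < m | i != j) 'X_i ^+ label i.+1 P.

(* The coefficient of [t^n] in the difference quotient by [u_(j+1) - 1]:
   appending the new point to a block [B] of class [j] yields a partition whose
   weight is [u_1 ... u_(j+1)] times the summand for [B]. *)
Definition Qcoef j n : {mpoly int[m]} :=
  \sum_(P : {set {set 'I_n}} | Pim m P)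
     \sum_(B in P | block_class P j B) weight_but P j * 'X_j ^+ (rank P B).+1.

Lemma weightE n (P : {set {set 'I_n}}) j : weight P = weight_but P j * 'X_j ^+ label j.+1 P.
Proof. by rewrite /weight (bigD1 j) //= mulrC. Qed.

Lemma subst_vars_monomial (f : 'I_m -> {mpoly int[m]}) (e : 'I_m -> nat) :
  subst_vars f (\prod_(i < m) 'X_i ^+ e i) = \prod_(i < m) f i ^+ e i.
Proof.
rewrite /subst_vars rmorph_prod; apply: eq_bigr => i _.
by rewrite rmorphXn /= comp_mpolyXU -tnth_nth tnth_mktuple.
Qed.

Lemma prod_sub_first j (e : 'I_m -> nat) : val j = 0%N ->
  \prod_(i < m) sub_first i ^+ e i = \prod_(i < m | i != j) 'X_i ^+ e i.
Proof.
move=> j0; rewrite (bigD1 j) //= /sub_first j0 eqxx expr1n mul1r.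
apply: eq_bigr => i neq_ij; rewrite ifF //; apply: contraNF neq_ij => /eqP i0.
by apply/eqP/val_inj; rewrite /= i0 j0.
Qed.

Lemma prod_sub_merge j (e : 'I_m -> nat) (j' : 'I_m) : val j != 0%N -> val j' = (val j).-1 ->
  \prod_(i < m) sub_merge j i ^+ e i = \prod_(i < m | i != j) 'X_i ^+ e i * 'X_j ^+ e j'.
Proof.
move=> j_neq0 ej'.
have jF : (val j == (val j).-1) = false.
  by case: (val j) j_neq0 => [//|k _] /=; rewrite eq_sym (ltn_eqF (ltnSn k)).
have neq_j'j : j' != j by apply: contraFneq jF => ej; rewrite -{1}ej ej'.
rewrite (bigD1 j) //= /sub_merge jF eqxx expr1n mul1r.
rewrite (eq_bigr (fun i => 'X_i ^+ e i * (if val i == (val j).-1 then 'X_j ^+ e i else 1))); last first.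
  by move=> i neq_ij; rewrite (negbTE neq_ij); case: ifP => _; rewrite ?exprMn ?mulr1.
rewrite big_split /=; congr (_ * _).
rewrite (bigD1 j') //= -ej' eqxx big1 ?mulr1 // => i /andP[_ neq_ij'].
by rewrite ifF //; apply: contraNF neq_ij' => /eqP ei; apply/eqP/val_inj; rewrite /= ei ej'.
Qed.

Lemma numer_sub_weight n (P : {set {set 'I_n}}) j :
  (if val j == 0%N then 'X_j * subst_vars (@sub_first m) (weight P)
   else subst_vars (sub_merge j) (weight P)) =
  weight_but P j * 'X_j ^+ (if val j == 0%N then 1%N else label (val j) P).
Proof.
case: eqP => [j0|/eqP j_neq0].
  by rewrite /weight subst_vars_monomial (prod_sub_first _ j0) mulrC.
have lt_j'm : ((val j).-1 < m)%N by apply: leq_ltn_trans (leq_pred _) (ltn_ord j).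
rewrite /weight subst_vars_monomial (prod_sub_merge _ j_neq0 (erefl : val (Ordinal lt_j'm) = _)).
by rewrite /= prednK // lt0n.
Qed.

Lemma mulXsub1_class_sum n (P : {set {set 'I_n}}) j : partition P [set: 'I_n] ->
  ('X_j - 1) * \sum_(B in P | block_class P j B) weight_but P j * 'X_j ^+ (rank P B).+1 =
  weight P - (if val j == 0%N then 'X_j * subst_vars (@sub_first m) (weight P)
              else subst_vars (sub_merge j) (weight P)).
Proof.
move=> partP; rewrite numer_sub_weight (weightE _ j).
pose A1 z := (val j != 0%N) && before P (val j).-1 z.
pose A2 z := before P (val j) z.
have A1_up : upward_closed A1.
  by move=> x y le_xy /andP[j_neq0 H]; rewrite /A1 j_neq0; apply: starts_before_mono le_xy H.
have A2_up : upward_closed A2 by move=> x y; apply: starts_before_mono.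
have A1_A2 x : A1 x -> A2 x.
  by case/andP => j_neq0; apply: starts_before_depth_mono; apply: leq_pred.
have := telescope_rank ('X_j : {mpoly int[m]}) A1_up A2_up A1_A2 (bmax_inj partP).
rewrite (eq_bigl (fun B => (B \in P) && block_class P j B)); last first.
  by move=> B; rewrite /block_class /A1 /A2 negb_and negbK.
rewrite -/(rank P _) => {}telescope.
rewrite (eq_bigr (fun B => weight_but P j * 'X_j * 'X_j ^+ rank P B)); last first.
  by move=> B _; rewrite exprS mulrA.
rewrite -mulr_sumr mulrCA telescope labelE.
case: eqP => [j0|/eqP j_neq0] /=.
  rewrite /A1 j0 /= (_ : [set B in P | false] = set0) ?cards0; last by apply/setP => B; rewrite !inE andbF.
  by rewrite !mulrBr exprS mulrA expr0 mulr1 expr1.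
have j_gt0 : (0 < val j)%N by rewrite lt0n.
have -> : label (val j) P = #|[set B in P | A1 (bmax B)]|.+1.
  by rewrite -{1}(prednK j_gt0) labelE /A1 j_neq0.
by rewrite !mulrBr !exprS !mulrA.
Qed.

Lemma Qcoef_numer_sub j n : ('X_j - 1) * Qcoef j n = Fcoef m n - numer_sub j (Fcoef m) n.
Proof.
have subst_sum f (g : {set {set 'I_n}} -> {mpoly int[m]}) :
    subst_vars f (\sum_(P | Pim m P) g P) = \sum_(P | Pim m P) subst_vars f (g P).
  by rewrite /subst_vars raddf_sum.
rewrite /Qcoef /numer_sub /Fcoef mulr_sumr; case: eqP => j0 /=;
  rewrite subst_sum ?mulr_sumr -sumrB; apply: eq_bigr => P /andP[partP _];
  rewrite mulXsub1_class_sum //; first by rewrite j0.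
by rewrite (introF eqP j0).
Qed.

Lemma weight_extend_None n (P : {set {set 'I_n}}) : partition P [set: 'I_n] ->
  weight (extend P None) = (\prod_(i < m) 'X_i) * weight P.
Proof.
move=> partP; rewrite /weight -big_split; apply: eq_bigr => i _.
by rewrite label_extend_None // exprS.
Qed.

Lemma weight_extend_Some n (P : {set {set 'I_n}}) B j :
  partition P [set: 'I_n] -> B \in P -> block_class P j B ->
  weight (extend P (Some B)) =
  (\prod_(i < m | (i <= j)%N) 'X_i) * (weight_but P j * 'X_j ^+ (rank P B).+1).
Proof.
move=> partP BP cB; rewrite /weight (eq_bigr (fun k : 'I_m =>
  'X_k ^+ (k <= j)%N * 'X_k ^+ (if k == j then (rank P B).+1 else label k.+1 P))); last first.
  move=> k _; rewrite -exprD (label_extend_Some k partP BP cB).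
  case: (eqVneq k j) => [->|neq_kj]; first by rewrite ltnn eqxx leqnn add1n.
  case: (ltngtP k j) => // eq_kj.
  by rewrite (val_inj eq_kj) eqxx in neq_kj.
rewrite big_split /=; congr (_ * _).
  by rewrite [RHS]big_mkcond; apply: eq_bigr => k _; case: (k <= j)%N; rewrite ?expr1 ?expr0.
rewrite (bigD1 j) //= eqxx mulrC /weight_but; congr (_ * _).
by apply: eq_bigr => k neq_kj; rewrite (negbTE neq_kj).
Qed.

Definition extendable n (P : {set {set 'I_n}}) (o : option {set 'I_n}) : bool :=
  choice_in P o && ~~ (isSome o && ~~ before P m.-1 (choice_max o)).

Hypothesis m_gt0 : (0 < m)%N.

Lemma Fcoef_extend n :
  Fcoef m n.+1 = \sum_(P : {set {set 'I_n}} | Pim m P) \sum_(o | extendable P o) weight (extend P o).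
Proof.
rewrite /Fcoef (reindex_onto (fun Po : {set {set 'I_n}} * option {set 'I_n} => extend Po.1 Po.2)
                             (fun P' => (trace_part P', last_choice P'))); last first.
  by move=> P' /andP[partP' _]; apply: extend_trace.
rewrite pair_big_dep; apply: eq_bigl => -[P o] /=.
apply/andP/andP => [[PimPo /eqP[eP eo]]|[PimP Po]].
  have partPo : partition (extend P o) [set: 'I_n.+1] by case/andP: PimPo.
  have partP := partition_trace_part partPo; have Po := choice_in_last partPo.
  rewrite eP eo in partP Po; move: PimPo; rewrite Pim_extend //.
  by case/andP => PimP nesting_ok; rewrite /extendable Po nesting_ok.
have partP : partition P [set: 'I_n] by case/andP: PimP.
case/andP: Po => Po nesting_ok; rewrite Pim_extend // PimP nesting_ok; split => //.
by rewrite trace_part_extend ?last_choice_extend //; case/and3P: partP.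
Qed.

Lemma weight_extensions n (P : {set {set 'I_n}}) : partition P [set: 'I_n] ->
  \sum_(o | extendable P o) weight (extend P o) =
  (\prod_(i < m) 'X_i) * weight P +
  \sum_(j < m) (\prod_(i < m | (i <= j)%N) 'X_i) *
     \sum_(B in P | block_class P j B) weight_but P j * 'X_j ^+ (rank P B).+1.
Proof.
move=> partP; rewrite big_option /extendable /= weight_extend_None //; congr (_ + _).
rewrite (eq_bigl (fun B => (B \in P) && before P m.-1 (bmax B))); last by move=> B; rewrite negbK.
rewrite (eq_bigr (fun j : 'I_m => \sum_(B in P | block_class P j B)
   (\prod_(i < m | (i <= j)%N) 'X_i) * (weight_but P j * 'X_j ^+ (rank P B).+1)));
  last by move=> j _; rewrite mulr_sumr.
rewrite (exchange_big_dep (fun B => B \in P)) /=; last by move=> j B _ /andP[].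
rewrite big_mkcondr; apply: eq_bigr => B BP; case: ifP => before_B.
  have [j le_j cB] := block_class_exists before_B.
  have lt_jm : (j < m)%N by apply: leq_ltn_trans le_j _; rewrite prednK.
  rewrite (big_pred1 (Ordinal lt_jm)); first exact: weight_extend_Some partP BP (cB : block_class P (Ordinal lt_jm) B).
  move=> i; rewrite /= BP /=; apply/idP/eqP => [ci|->//].
  by apply/val_inj; rewrite /= (block_class_unique ci cB).
symmetry; apply: big1 => j /andP[_ cB].
by move: before_B; rewrite (block_classE cB) -ltnS prednK // ltn_ord.
Qed.

Lemma FcoefS n :
  Fcoef m n.+1 = (\prod_(i < m) 'X_i) * Fcoef m n +
                 \sum_(j < m) (\prod_(i < m | (i <= j)%N) 'X_i) * Qcoef j n.
Proof.
rewrite Fcoef_extend /Qcoef /Fcoef mulr_sumr.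
under [X in _ = _ + X]eq_bigr => j _ do rewrite mulr_sumr.
rewrite exchange_big /= -big_split; apply: eq_bigr => P /andP[partP _].
by rewrite weight_extensions.
Qed.

End Weights.

Lemma Pim_ord0 m (P : {set {set 'I_0}}) : Pim m P = (P == set0).
Proof.
have set0E (A : {set 'I_0}) : A = set0 by apply/setP => -[].
apply/idP/eqP => [/andP[/and3P[_ _ P0] _]|->].
  by apply/setP => B; rewrite inE; apply/negbTE; rewrite (set0E B).
rewrite /Pim /set_partition has_nestingE; apply/andP; split.
  apply/and3P; split.
  - by rewrite /cover big_set0 (set0E setT).
  - by apply/trivIsetP => A B; rewrite inE.
  - by rewrite inE.
by apply/existsP => -[[]].
Qed.

Lemma Fcoef0 m : Fcoef m 0 = \prod_(i < m) 'X_i.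
Proof.
rewrite /Fcoef (big_pred1 set0); last by move=> P; rewrite Pim_ord0.
apply: eq_bigr => i _; rewrite labelE (_ : [set B in set0 | _] = set0) ?cards0 ?expr1 //.
by apply/setP => B; rewrite !inE.
Qed.

Unset Implicit Arguments.

Theorem proposition2 (m : nat) (hm : (0 < m)%N) :
  let F := Fcoef m in
  let U := \prod_(i < m) ('X_i : {mpoly int[m]}) in
  exists Q : 'I_m -> nat -> {mpoly int[m]},
    (forall (j : 'I_m) (n : nat), ('X_j - 1) * Q j n = F n - numer_sub j F n) /\
    (forall n : nat,
       F n = fcst U n
             + tmul (fun k => U * F k) n
             + tmul (fun k => \sum_(j < m)
                                (\prod_(i < m | (i <= j)%N) 'X_i) * Q j k) n).
Proof.
move=> F U; exists (@Qcoef m); split; first exact: Qcoef_numer_sub.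
case=> [|n]; first by rewrite /fcst /tmul !addr0 /F Fcoef0.
by rewrite /fcst /tmul add0r /F FcoefS.
Qed.
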